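(* Let $\tilde r\in(\tfrac14,\tfrac12)$ and let $\rho$ be an RSR-representation of the four-punctured sphere whose local monodromies $M_j$ are conjugate to $\mathrm{diag}(e^{2\pi i\tilde r},e^{-2\pi i\tilde r})$, with trace coordinates $(\tilde x,\tilde y,\tilde z)=(\mathrm{Tr}(M_2M_1),\mathrm{Tr}(M_3M_2),\mathrm{Tr}(M_3M_1))$. Then, with $r=2\tilde r-\tfrac12$, there is a real representation (i.e. a real point of the character variety, conjugate to an $\mathrm{SL}(2,\mathbb{R})$-representation) in $\mathcal M^r_{1,1}$ whose trace coordinates $(x,y,z)$ satisfy $\tilde x=2-x^2$, $\tilde y=2-y^2$, $\tilde z=2-z^2$.
   Context: Four-punctured sphere $S_4=\mathbb{C}P^1\setminus\{p_1,\dots,p_4\}$ with generators $\gamma_{p_j}$ of $\pi_1(S_4,s_0)$ (simple anticlockwise loops around $p_j$) satisfying $\gamma_{p_4}\gamma_{p_3}\gamma_{p_2}\gamma_{p_1}=1$, $M_j=\rho(\gamma_{p_j})$. An irreducible representation $\rho\colon\pi_1(S_4,s_0)\to\mathrm{SL}(2,\mathbb{C})$ is RSR if: it takes values in $\mathrm{SL}(2,\mathbb{R})$ with $\mathrm{Tr}(M_1M_2),\mathrm{Tr}(M_2M_3),\mathrm{Tr}(M_1M_3)<-2$; all $M_j$ lie in the conjugacy class of $\mathrm{diag}(e^{2\pi i\tilde r},e^{-2\pi i\tilde r})$ with $\tilde r\in(\tfrac14,\tfrac12)$; and $\mathrm{tr}(M_1M_3)=\mathrm{tr}(M_2M_4)$.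 $\mathcal M^r_{1,1}$ is the space of conjugacy classes of representations $\langle\gamma_x,\gamma_y\rangle=\pi_1(T^2\setminus\{o\})\to\mathrm{SL}(2,\mathbb{C})$ such that the commutator $\gamma_y^{-1}\gamma_x^{-1}\gamma_y\gamma_x$ (a loop around the puncture) is mapped into the conjugacy class of $\mathrm{diag}(e^{-2\pi ir},e^{2\pi ir})$; trace coordinates $x=\mathrm{Tr}X$, $y=\mathrm{Tr}Y$, $z=\mathrm{Tr}(YX)$ with $X,Y$ the images of $\gamma_x,\gamma_y$; they satisfy $x^2+y^2+z^2-xyz-2-2\cos(2\pi r)=0$. *)

From HB Require Import structures.
From mathcomp Require Import all_boot all_order all_algebra.
From mathcomp Require Import all_classical all_reals.
From mathcomp Require Import trigo.
From mathcomp Require Import complex.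
Set Implicit Arguments. Unset Strict Implicit. Unset Printing Implicit Defensive.
Import Order.TTheory GRing.Theory Num.Theory.
Local Open Scope ring_scope.

Section Defs.
Variable R : realType.

Definition expi (t : R) : R[i] := Complex (cos t) (sin t).

Definition toC (A : 'M[R]_2) : 'M[R[i]]_2 := map_mx (fun a => Complex a 0) A.

Definition diag2 (a b : R[i]) : 'M[R[i]]_2 :=
  \matrix_(i < 2, j < 2) (if i == j then (if i == 0 then a else b) else 0).

Definition conj_to (A D : 'M[R[i]]_2) : Prop :=
  exists P : 'M[R[i]]_2, P \in unitmx /\ invmx P *m A *m P = D.

Definition in_class (A : 'M[R[i]]_2) (t : R) : Prop :=
  conj_to A (diag2 (expi t) (expi (- t))).

(* The representation generated by M1..M4 (acting on C^2) is irreducible: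
   no common invariant complex line, i.e. no common eigenvector. *)
Definition irreducible4 (M1 M2 M3 M4 : 'M[R]_2) : Prop :=
  ~ exists v : 'cV[R[i]]_2, v != 0 /\
      (forall M, M \in [:: M1; M2; M3; M4] ->
         exists lam : R[i], toC M *m v = lam *: v).

(* RSR representation of pi_1(S_4) given by M_j = rho(gamma_{p_j}),
   with gamma_4 gamma_3 gamma_2 gamma_1 = 1. *)
Definition RSR (rt : R) (M1 M2 M3 M4 : 'M[R]_2) : Prop :=
  [/\ [/\ \det M1 = 1, \det M2 = 1, \det M3 = 1 & \det M4 = 1],
      M4 *m M3 *m M2 *m M1 = 1%:M /\ irreducible4 M1 M2 M3 M4,
      [/\ 1/4 < rt, rt < 1/2,
          \tr (M1 *m M2) < -2, \tr (M2 *m M3) < -2 & \tr (M1 *m M3) < -2],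
      [/\ in_class (toC M1) (2 * pi * rt), in_class (toC M2) (2 * pi * rt),
          in_class (toC M3) (2 * pi * rt) & in_class (toC M4) (2 * pi * rt)]
    & \tr (M1 *m M3) = \tr (M2 *m M4)].

End Defs.

From HB Require Import structures.
From mathcomp Require Import all_boot all_order all_algebra.
From mathcomp Require Import all_classical all_reals.
From mathcomp Require Import trigo.
From mathcomp Require Import complex.
From mathcomp Require Import ring lra.
Import Order.TTheory GRing.Theory Num.Theory.
Local Open Scope ring_scope.

(* The traces xt, yt, zt of a representation of the four-punctured sphere in
   SL(2) satisfy the Fricke cubic, here with all four boundary traces equal to
   t = 2 cos (2 pi rt).  After the substitution xt = 2 - x^2, yt = 2 - y^2,
   zt = 2 - z^2 the cubic factors as (q - xyz) (q + xyz) with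
   q = x^2 + y^2 + z^2 - 4 + t^2.  As xt, yt, zt < -2, the nonnegative roots
   x, y, z exceed 2, so q + xyz > 0 and q = xyz: this is the relation
   x^2 + y^2 + z^2 - xyz - 2 = 2 - t^2 = 2 cos (2 pi r) of the one-holed torus.
   Since z > 2 the triple is realised as (tr X, tr Y, tr YX) by a real pair in
   SL(2), and the commutator, with trace 2 cos (2 pi r) and 0 < r < 1/2, is
   elliptic, hence conjugate over C to diag(e^(-2 pi i r), e^(2 pi i r)). *)

Fact lift0_ord2 : lift ord0 ord0 = 1 :> 'I_2. Proof. exact: val_inj. Qed.

Section Matrix2.
Context {R : comPzRingType}.
Implicit Types (A B C X Y : 'M[R]_2) (a b c d x y z : R).

Definition mx2 a b c d : 'M[R]_2 :=
  \matrix_(i, j) if i == 0 then (if j == 0 then a else b) else (if j == 0 then c else d).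

Lemma det_mx2 A : \det A = A 0 0 * A 1 1 - A 0 1 * A 1 0.
Proof.
rewrite (expand_det_row _ 0) !big_ord_recl big_ord0 addr0 /cofactor !det_mx11 !mxE.
have lift10 : lift 1 0 = 0 :> 'I_2 by exact: val_inj.
by rewrite lift0_ord2 lift10; ring.
Qed.

Lemma mxtrace2 A : \tr A = A 0 0 + A 1 1.
Proof. by rewrite /mxtrace !big_ord_recl big_ord0 addr0 lift0_ord2. Qed.

Lemma mulmx2E A B i j : (A *m B) i j = A i 0 * B 0 j + A i 1 * B 1 j.
Proof. by rewrite mxE !big_ord_recl big_ord0 addr0 lift0_ord2. Qed.

Lemma mx2P A B :
  A 0 0 = B 0 0 -> A 0 1 = B 0 1 -> A 1 0 = B 1 0 -> A 1 1 = B 1 1 -> A = B.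
Proof.
move=> e00 e01 e10 e11; apply/matrixP => i j.
have ord2 (k : 'I_2) : k = 0 \/ k = 1.
  by case: k => [[|[|//]] ?]; [left | right]; apply/val_inj.
by case: (ord2 i) => ->; case: (ord2 j) => ->.
Qed.

Lemma mulmx_tr_sub A : A *m ((\tr A)%:M - A) = (\det A)%:M.
Proof. by apply: mx2P; rewrite mulmx2E !mxE det_mx2 mxtrace2 /=; ring. Qed.

Lemma mxtrace_commutator_adj X Y :
  \tr (((\tr Y)%:M - Y) *m ((\tr X)%:M - X) *m Y *m X) =
  \det Y * \tr X ^+ 2 + \det X * \tr Y ^+ 2 + \tr (Y *m X) ^+ 2
  - \tr X * \tr Y * \tr (Y *m X) - 2 * \det X * \det Y.
Proof. by rewrite !det_mx2 !mxtrace2 !mulmx2E !mxE /=; ring. Qed.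

Definition fricke4 a b c d x y z :=
  x ^+ 2 + y ^+ 2 + z ^+ 2 + x * y * z
  - (a * b + c * d) * x - (b * c + a * d) * y - (a * c + b * d) * z
  + a ^+ 2 + b ^+ 2 + c ^+ 2 + d ^+ 2 + a * b * c * d - 4.

Lemma fricke4_mx2 A B C : \det A = 1 -> \det B = 1 -> \det C = 1 ->
  fricke4 (\tr A) (\tr B) (\tr C) (\tr (C *m B *m A))
          (\tr (B *m A)) (\tr (C *m B)) (\tr (C *m A)) = 0.
Proof.
move=> dA dB dC.
set a := \tr A; set b := \tr B; set c := \tr C; set d := \tr (C *m B *m A).
set x := \tr (B *m A); set y := \tr (C *m B); set z := \tr (C *m A).
(* Weighting the monomials by determinants turns the relation into an identity
   in the entries. *)
have hom : \det C * x ^+ 2 + \det A * y ^+ 2 + \det B * z ^+ 2 + x * y * z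
    - (a * b * \det C + c * d) * x - (b * c * \det A + a * d) * y
    - (a * c * \det B + b * d) * z + a ^+ 2 * \det B * \det C
    + b ^+ 2 * \det A * \det C + c ^+ 2 * \det A * \det B + d ^+ 2
    + a * b * c * d - 4 * \det A * \det B * \det C = 0.
  by rewrite /a /b /c /d /x /y /z !det_mx2 !mxtrace2 !mulmx2E; ring.
by rewrite -[RHS]hom dA dB dC /fricke4; ring.
Qed.

Lemma fricke4_sqr_sub t x y z :
  let q := x ^+ 2 + y ^+ 2 + z ^+ 2 - 4 + t ^+ 2 in
  fricke4 t t t t (2 - x ^+ 2) (2 - y ^+ 2) (2 - z ^+ 2) =
  (q - x * y * z) * (q + x * y * z).
Proof. by rewrite /fricke4; ring. Qed.

End Matrix2.

Section SL2.
Context {R : comUnitRingType}.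
Implicit Types A B X Y : 'M[R]_2.

Lemma invmx_det1 A : \det A = 1 -> invmx A = (\tr A)%:M - A.
Proof.
move=> dA; have uA : A \in unitmx by rewrite unitmxE dA unitr1.
by rewrite -[RHS]mul1mx -(mulVmx uA) -mulmxA mulmx_tr_sub dA mulmx1.
Qed.

Lemma mxtrace_invmx_det1 A : \det A = 1 -> \tr (invmx A) = \tr A.
Proof. by move=> dA; rewrite invmx_det1 // raddfB /= mxtrace_scalar mulr2n addrK. Qed.

Lemma mxtrace_mulmx1_det1 A B : \det A = 1 -> B *m A = 1%:M -> \tr B = \tr A.
Proof.
move=> dA BA; have uA : A \in unitmx by rewrite unitmxE dA unitr1.
by rewrite -[B]mulmx1 -(mulmxV uA) mulmxA BA mul1mx mxtrace_invmx_det1.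
Qed.

Lemma mxtrace_commutator_det1 X Y : \det X = 1 -> \det Y = 1 ->
  \tr (invmx Y *m invmx X *m Y *m X) =
  \tr X ^+ 2 + \tr Y ^+ 2 + \tr (Y *m X) ^+ 2 - \tr X * \tr Y * \tr (Y *m X) - 2.
Proof.
by move=> dX dY; rewrite !invmx_det1 // mxtrace_commutator_adj dX dY; ring.
Qed.

End SL2.

Lemma sl2_entry01_neq0 {R : realDomainType} (K : 'M[R]_2) :
  \det K = 1 -> \tr K ^+ 2 < 4 -> K 0 1 != 0.
Proof.
rewrite det_mx2 mxtrace2 => dK trK; apply/eqP => K01.
rewrite K01 mul0r subr0 in dK.
have := sqr_ge0 (K 0 0 - K 1 1); nra.
Qed.

Lemma sl2_real_traces {R : rcfType} (x y z : R) : 4 <= z ^+ 2 ->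
  exists X Y : 'M[R]_2,
    [/\ \det X = 1, \det Y = 1, \tr X = x, \tr Y = y & \tr (Y *m X) = z].
Proof.
move=> z4; set w := Num.sqrt (z ^+ 2 - 4).
have w2 : w ^+ 2 = z ^+ 2 - 4 by rewrite sqr_sqrtr // subr_ge0.
(* s and u are the roots of T^2 - z T + 1. *)
pose s := (z + w) / 2; pose u := (z - w) / 2.
have su : s * u = 1.
  have -> : s * u = (z ^+ 2 - w ^+ 2) / 4 by rewrite /s /u; field.
  by rewrite w2; field.
exists (mx2 x (-1) 1 0), (mx2 0 s (- u) y).
rewrite !det_mx2 !mxtrace2 !mulmx2E !mxE /=; split; try ring.
- by rewrite -su; ring.
- by rewrite /s /u; field.
Qed.

Lemma sphere_to_torus {R : rcfType} {t xt yt zt : R} :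
  xt < -2 -> yt < -2 -> zt < -2 -> fricke4 t t t t xt yt zt = 0 ->
  exists x y z : R, [/\ xt = 2 - x ^+ 2, yt = 2 - y ^+ 2, zt = 2 - z ^+ 2, 4 <= z ^+ 2
    & x ^+ 2 + y ^+ 2 + z ^+ 2 - x * y * z - 2 = 2 - t ^+ 2].
Proof.
move=> xt2 yt2 zt2 fr.
exists (Num.sqrt (2 - xt)), (Num.sqrt (2 - yt)), (Num.sqrt (2 - zt)).
set x := Num.sqrt _; set y := Num.sqrt _; set z := Num.sqrt _.
have x2 : x ^+ 2 = 2 - xt by rewrite sqr_sqrtr //; lra.
have y2 : y ^+ 2 = 2 - yt by rewrite sqr_sqrtr //; lra.
have z2 : z ^+ 2 = 2 - zt by rewrite sqr_sqrtr //; lra.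
have xyz0 : 0 <= x * y * z by rewrite !mulr_ge0 ?sqrtr_ge0.
have q_pos : 0 < x ^+ 2 + y ^+ 2 + z ^+ 2 - 4 + t ^+ 2 + x * y * z.
  by have := sqr_ge0 t; lra.
have fr' : fricke4 t t t t (2 - x ^+ 2) (2 - y ^+ 2) (2 - z ^+ 2) = 0.
  by rewrite x2 y2 z2 !subKr.
move: fr'; rewrite fricke4_sqr_sub => /eqP.
rewrite mulf_eq0 (gt_eqF q_pos) orbF subr_eq0 => /eqP rel.
split; [by rewrite x2 subKr | by rewrite y2 subKr | by rewrite z2 subKr | |].
- by rewrite z2; lra.
- by rewrite -rel; ring.
Qed.

Section Conjugacy.
Context {R : realType}.

Lemma toCE (A : 'M[R]_2) : toC A = map_mx (real_complex R) A.
Proof. by []. Qed.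

Lemma expiD_expiN (t : R) : expi t + expi (- t) = (2 * cos t)%:C%C.
Proof.
rewrite /expi cosN sinN; apply/eqP; rewrite eq_complex /=.
by apply/andP; split; apply/eqP; ring.
Qed.

Lemma expiM_expiN (t : R) : expi t * expi (- t) = 1.
Proof.
rewrite /expi cosN sinN; apply/eqP; rewrite eq_complex /=.
by apply/andP; split; apply/eqP; rewrite -?(cos2Dsin2 t); ring.
Qed.

Lemma expi_neq_expiN (t : R) : sin t != 0 -> expi t != expi (- t).
Proof.
move=> st; rewrite /expi cosN sinN eq_complex /= negb_and; apply/orP; right.
by apply: contra st => /eqP st; apply/eqP; lra.
Qed.

Lemma conj_to_diag2 (A : 'M[R[i]]_2) (l m : R[i]) :
  A 0 1 != 0 -> l != m -> \tr A = l + m -> \det A = l * m -> conj_to A (diag2 l m).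
Proof.
rewrite mxtrace2 det_mx2 => A01 lm trA detA.
have eigen e : (e - l) * (e - m) = 0 ->
    A 1 0 * A 0 1 + A 1 1 * (e - A 0 0) = (e - A 0 0) * e.
  move=> he; apply: subr0_eq.
  transitivity (l * m - (A 0 0 * A 1 1 - A 0 1 * A 1 0)
                + e * (A 0 0 + A 1 1 - (l + m)) - (e - l) * (e - m)); first ring.
  by rewrite detA trA he; ring.
(* The columns of P are the eigenvectors (A 0 1, e - A 0 0) for e = l, m. *)
pose P : 'M[R[i]]_2 :=
  \matrix_(i, j) if i == 0 then A 0 1 else (if j == 0 then l else m) - A 0 0.
have uP : P \in unitmx.
  rewrite unitmxE unitfE det_mx2 !mxE /=.
  rewrite (_ : _ - _ = A 0 1 * (m - l)); last ring.
  by rewrite mulf_neq0 // subr_eq0 eq_sym.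
exists P; split => //; rewrite -mulmxA; apply: (canLR (mulKmx uP)).
apply: mx2P; rewrite !mulmx2E !mxE /=.
- ring.
- ring.
- by rewrite mulr0 addr0 eigen // subrr mul0r.
- by rewrite mulr0 add0r eigen // subrr mulr0.
Qed.

Lemma in_class_of_mxtrace (K : 'M[R]_2) (phi : R) :
  \det K = 1 -> \tr K = 2 * cos phi -> sin phi != 0 -> in_class (toC K) phi.
Proof.
move=> dK trK sphi.
have K01 : K 0 1 != 0.
  apply: sl2_entry01_neq0 => //; rewrite trK.
  have sin2_gt0 : 0 < sin phi ^+ 2 by rewrite exprn_even_gt0.
  by have := cos2Dsin2 phi; nra.
apply: conj_to_diag2; rewrite ?expi_neq_expiN //.
- by rewrite mxE eq_complex /= negb_and K01.
- by rewrite toCE trace_map_mx trK expiD_expiN.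
- by rewrite toCE det_map_mx dK expiM_expiN.
Qed.

Lemma mxtrace_in_class {M : 'M[R]_2} {t : R} : in_class (toC M) t -> \tr M = 2 * cos t.
Proof.
case=> P [uP PMP].
have : \tr (toC M) = \tr (diag2 (expi t) (expi (- t))).
  by rewrite -PMP mxtrace_mulC mulmxA mulmxV ?mul1mx.
by rewrite toCE trace_map_mx (mxtrace2 (diag2 _ _)) !mxE /= expiD_expiN => /fmorph_inj.
Qed.

End Conjugacy.

Lemma cos_double_sub_pi {R : realType} (t : R) : 2 * cos (2 * t - pi) = 2 - (2 * cos t) ^+ 2.
Proof.
rewrite cosB cospi sinpi mulr0 addr0 (_ : 2 * t = t + t) ?cosD; last ring.
by have := cos2Dsin2 t; nra.
Qed.

Theorem corollary3p12 (R : realType) (rt : R) (M1 M2 M3 M4 : 'M[R]_2) :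
  1/4 < rt -> rt < 1/2 ->
  RSR rt M1 M2 M3 M4 ->
  let xt := \tr (M2 *m M1) in
  let yt := \tr (M3 *m M2) in
  let zt := \tr (M3 *m M1) in
  let r := 2 * rt - 1/2 in
  exists X Y : 'M[R]_2,
    [/\ \det X = 1 /\ \det Y = 1,
        in_class (toC (invmx Y *m invmx X *m Y *m X)) (- (2 * pi * r)),
        xt = 2 - (\tr X) ^+ 2,
        yt = 2 - (\tr Y) ^+ 2
      & zt = 2 - (\tr (Y *m X)) ^+ 2].
Proof.
move=> rt_gt rt_lt [[dM1 dM2 dM3 _] [prodM _] [_ _ trM12 trM23 trM13] [cM1 cM2 cM3 cM4] _].
move=> xt yt zt r.
have trM4 : \tr M4 = \tr (M3 *m M2 *m M1).
  by apply: mxtrace_mulmx1_det1; rewrite ?mulmxA // !det_mulmx dM1 dM2 dM3 !mulr1.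
have := fricke4_mx2 M1 M2 M3 dM1 dM2 dM3.
rewrite -trM4 (mxtrace_in_class cM1) (mxtrace_in_class cM2) (mxtrace_in_class cM3).
rewrite (mxtrace_in_class cM4) -/xt -/yt -/zt => fr.
have xt2 : xt < -2 by rewrite /xt mxtrace_mulC.
have yt2 : yt < -2 by rewrite /yt mxtrace_mulC.
have zt2 : zt < -2 by rewrite /zt mxtrace_mulC.
have [x [y [z [-> -> -> z4 rel]]]] := sphere_to_torus xt2 yt2 zt2 fr.
have [X [Y [dX dY trX trY trYX]]] := sl2_real_traces x y z z4.
exists X, Y; rewrite trX trY trYX; split => //.
have r_bounds : 0 < 2 * pi * r < pi by have := pi_gt0 R; rewrite /r; nra.
have sin_r : sin (- (2 * pi * r)) != 0 by rewrite sinN oppr_eq0 gt_eqF // sin_gt0_pi.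
apply: in_class_of_mxtrace => //.
- by rewrite !det_mulmx !det_inv dX dY invr1 !mul1r.
- rewrite mxtrace_commutator_det1 // trX trY trYX rel cosN -cos_double_sub_pi /r.
  by congr (2 * cos _); field.
Qed.
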